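(* Let $V_\mathbb{C}$ be a complex vector space of dimension $d\ge7$ with a non-degenerate quadratic form $q$, and identify $\mathfrak{so}(V_\mathbb{C},q)$ with $\Lambda^2V_\mathbb{C}$. For $i=1,2$ let $L_i\subset V_\mathbb{C}$ be a 1-dimensional subspace and $0\ne u_i\in L_i^\perp$ with $q(u_i)=0$ and $\dim(L_i+\mathbb{C}u_i)=2$, and set $\mathfrak{r}(L_i,u_i)=u_i\wedge(L_i+\mathbb{C}u_i)^\perp$. If $\mathfrak{h}_\mathbb{C}\subset\mathfrak{so}(V_\mathbb{C},q)$ is a Lie subalgebra containing $\mathfrak{r}(L_1,u_1)$ and $\mathfrak{r}(L_2,u_2)$, then $u_1\wedge u_2\in\mathfrak{h}_\mathbb{C}$.
   Context: The identification $\Lambda^2V_\mathbb{C}\cong\mathfrak{so}(V_\mathbb{C},q)$ sends $v\wedge w$ to the endomorphism $x\mapsto q(x,w)v-q(x,v)w$; orthogonal complements are with respect to $q$. *)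

From HB Require Import structures.
From mathcomp Require Import all_boot all_order all_algebra all_field.
From mathcomp Require Import reals.
From mathcomp Require Import complex.
Set Implicit Arguments. Unset Strict Implicit. Unset Printing Implicit Defensive.
Import GRing.Theory.
Local Open Scope ring_scope.

Definition bform (R : realType) (d : nat) (Q : 'M[R[i]]_d) (x y : 'cV[R[i]]_d) : R[i] :=
  (x^T *m Q *m y) 0 0.

(* v /\ w  as the endomorphism  x |-> q(x,w) v - q(x,v) w  (for symmetric Q). *)
Definition wedge (R : realType) (d : nat) (Q : 'M[R[i]]_d) (v w : 'cV[R[i]]_d) : 'M[R[i]]_d :=
  v *m w^T *m Q - w *m v^T *m Q.

Definition in_so (R : realType) (d : nat) (Q : 'M[R[i]]_d) (A : 'M[R[i]]_d) : Prop :=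
  forall x y, bform Q (A *m x) y + bform Q x (A *m y) = 0.

Definition lie_subalg_so (R : realType) (d : nat) (Q : 'M[R[i]]_d)
    (h : {vspace 'M[R[i]]_d}) : Prop :=
  (forall A, A \in h -> in_so Q A) /\
  (forall A B, A \in h -> B \in h -> A *m B - B *m A \in h).

Definition r_sub (R : realType) (d : nat) (Q : 'M[R[i]]_d)
    (L : {vspace 'cV[R[i]]_d}) (u : 'cV[R[i]]_d) (h : {vspace 'M[R[i]]_d}) : Prop :=
  forall w, (forall x, x \in (L + <[u]>)%VS -> bform Q x w = 0) -> wedge Q u w \in h.

From HB Require Import structures.
From mathcomp Require Import all_boot all_order all_algebra all_field.
From mathcomp Require Import reals complex zify.
Import GRing.Theory.
Local Open Scope ring_scope.

(* If w1 is orthogonal to u2 and w2 to u1, then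
     [u1 /\ w1, u2 /\ w2] = - q(w1,w2) u1 /\ u2 - q(u1,u2) w1 /\ w2,
   and u_i /\ w_i lies in r(L_i, u_i), hence in h, once w_i is orthogonal to
   L_i and u_i.  If q(u1,u2) = 0, it suffices to find w1 orthogonal to L1, u1,
   u2 and w2 orthogonal to L2, u1, u2 with q(w1,w2) <> 0: they exist because
   for a nondegenerate q two subspaces of codimension at most 3 in dimension
   d >= 7 cannot be orthogonal to each other.  If q(u1,u2) <> 0, then u1, u2
   span a hyperbolic plane, so the complement W of L1, L2, u1, u2 is not
   totally isotropic (otherwise W would lie in a space of dimension at most 2,
   while dim W >= 3); taking w1 = w2 = w in W with q(w,w) <> 0 kills the
   second term. *)

Lemma vline_of_dim1 {K : fieldType} {vT : vectType K} {L : {vspace vT}} :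
  \dim L = 1%N -> exists l, L = <[l]>%VS.
Proof.
move=> dimL; have nzL : L != 0%VS by apply: contra_eqN dimL => /eqP->; rewrite dimv0.
exists (vpick L); apply/eqP; rewrite eq_sym eqEdim -memvE memv_pick /=.
by rewrite dimL dim_vline vpick0 nzL.
Qed.

Lemma memvZ_eq (K : fieldType) (vT : vectType K) (U : {vspace vT}) (k : K) v :
  k != 0 -> (k *: v \in U) = (v \in U).
Proof. by move=> nzk; rewrite rpredZeq (negbTE nzk). Qed.

Lemma scalar_mx11_eq0 (F : nzRingType) (a : F) : ((a%:M : 'M_1) == 0) = (a == 0).
Proof. by apply/eqP/eqP => [/matrixP/(_ 0 0)|->]; rewrite ?mxE ?mulr1n // raddf0. Qed.

Lemma sub_trmx_of_kermx_annihilator (F : fieldType) d k m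
    (T : 'M[F]_(d, k)) (Y : 'M[F]_(m, d)) :
  Y *m (kermx T)^T = 0 -> (Y <= T^T)%MS.
Proof.
move=> /sub_kermxP sYK; apply: submx_trans sYK _.
have sTK : (T^T <= kermx (kermx T)^T)%MS.
  by apply/sub_kermxP; rewrite -trmx_mul mulmx_ker trmx0.
rewrite -(mxrank_leqif_sup sTK).2; apply/eqP.
by rewrite !mxrank_ker !mxrank_tr mxrank_ker subKn // rank_leq_row.
Qed.

Section OrthogonalComplement.
Context {F : fieldType} {d : nat} (Q : 'M[F]_d).

(* Subspaces are row spaces: the rows of [perpmx X] span the transposes of the
   vectors orthogonal to every column of [X]. *)
Definition perpmx {k} (X : 'M_(d, k)) : 'M_d := kermx (Q *m X).

Lemma sub_perpmx_row_mxP m k1 k2 (A : 'M_(m, d)) (X1 : 'M_(d, k1)) (X2 : 'M_(d, k2)) :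
  reflect ((A <= perpmx X1)%MS /\ (A <= perpmx X2)%MS) (A <= perpmx (row_mx X1 X2))%MS.
Proof. by rewrite !sub_kermx !mul_mx_row row_mx_eq0; apply: andP. Qed.

Lemma rank_perpmx k (X : 'M_(d, k)) : (d - k <= \rank (perpmx X))%N.
Proof. by rewrite mxrank_ker leq_sub2l // rank_leq_col. Qed.

Hypotheses (symQ : Q^T = Q) (unitQ : Q \in unitmx).

Lemma perpmx_orth_sub k1 k2 (X1 : 'M_(d, k1)) (X2 : 'M_(d, k2)) :
  perpmx X2 *m Q *m (perpmx X1)^T = 0 -> (perpmx X2 <= X1^T)%MS.
Proof.
move/sub_trmx_of_kermx_annihilator.
by rewrite trmx_mul symQ => /(submxMr (invmx Q)); rewrite !mulmxK.
Qed.

End OrthogonalComplement.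

Arguments perpmx {F d} Q {k} X.
Arguments rank_perpmx {F d} Q {k} X.
Arguments sub_perpmx_row_mxP {F d Q m k1 k2 A X1 X2}.
Arguments perpmx_orth_sub {F d Q}.

Section BilinearForm.
Context {R : realType} {d : nat} {Q : 'M[R[i]]_d}.
Implicit Types (a b c e x y w : 'cV[R[i]]_d).

Lemma bform_mx x y : x^T *m Q *m y = (bform Q x y)%:M.
Proof. exact: mx11_scalar. Qed.

Lemma bformDl x y w : bform Q (x + y) w = bform Q x w + bform Q y w.
Proof. by rewrite /bform linearD /= !mulmxDl mxE. Qed.

Lemma bformZl k x w : bform Q (k *: x) w = k * bform Q x w.
Proof. by rewrite /bform linearZ /= -!scalemxAl mxE. Qed.

Lemma bform_mulmx_tr m n (A : 'M_(m, d)) (B : 'M_(n, d)) i j :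
  (A *m Q *m B^T) i j = bform Q (row i A)^T (row j B)^T.
Proof. by rewrite /bform trmxK -row_mul !mxE; apply: eq_bigr => k _; rewrite !mxE. Qed.

Lemma gram_row_mx a b :
  (row_mx a b)^T *m Q *m row_mx a b =
  block_mx (bform Q a a)%:M (bform Q a b)%:M (bform Q b a)%:M (bform Q b b)%:M.
Proof. by rewrite tr_row_mx mul_col_mx mul_col_row !bform_mx. Qed.

Lemma exists_bform_neq0 m n (A : 'M_(m, d)) (B : 'M_(n, d)) :
  A *m Q *m B^T != 0 ->
  exists w1 w2, [/\ (w1^T <= A)%MS, (w2^T <= B)%MS & bform Q w1 w2 != 0].
Proof.
case/matrix0Pn => i [j]; rewrite bform_mulmx_tr => nz.
by exists (row i A)^T, (row j B)^T; rewrite !trmxK !row_sub.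
Qed.

Lemma wedge_mul a b c e :
  wedge Q a b *m wedge Q c e =
  bform Q b c *: (a *m e^T *m Q) - bform Q b e *: (a *m c^T *m Q)
  - (bform Q a c *: (b *m e^T *m Q) - bform Q a e *: (b *m c^T *m Q)).
Proof.
have mul4 x y z t : x *m y^T *m Q *m (z *m t^T *m Q) = bform Q y z *: (x *m t^T *m Q).
  rewrite !mulmxA -[x *m y^T *m Q *m z]mulmxA -[x *m y^T *m (Q *m z)]mulmxA.
  by rewrite [y^T *m (Q *m z)]mulmxA bform_mx mul_mx_scalar -!scalemxAl.
by rewrite /wedge mulmxBl !mulmxBr !mul4.
Qed.

Hypothesis symQ : Q^T = Q.

Lemma bformC x y : bform Q x y = bform Q y x.
Proof.
have trmx11 (A : 'M_1) : A 0 0 = A^T 0 0 by rewrite mxE.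
by rewrite /bform [RHS]trmx11 !trmx_mul trmxK symQ mulmxA.
Qed.

Lemma sub_perpmx_vecP x w : reflect (bform Q x w = 0) (w^T <= perpmx Q x)%MS.
Proof. by rewrite sub_kermx mulmxA bform_mx scalar_mx11_eq0 bformC; apply: eqP. Qed.

Lemma sub_perpmx2P a b w :
  reflect (bform Q a w = 0 /\ bform Q b w = 0) (w^T <= perpmx Q (row_mx a b))%MS.
Proof.
apply: (iffP sub_perpmx_row_mxP).
  by case=> /sub_perpmx_vecP ? /sub_perpmx_vecP ?.
by case=> /sub_perpmx_vecP ? /sub_perpmx_vecP ?.
Qed.

Lemma wedge_commutator {u1 u2 w1 w2} :
  bform Q u2 w1 = 0 -> bform Q u1 w2 = 0 ->
  wedge Q u1 w1 *m wedge Q u2 w2 - wedge Q u2 w2 *m wedge Q u1 w1 =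
  - (bform Q w1 w2 *: wedge Q u1 u2) - bform Q u1 u2 *: wedge Q w1 w2.
Proof.
move=> u2w1 u1w2.
rewrite [X in X - _ = _]wedge_mul [X in _ - X = _]wedge_mul /wedge.
rewrite (bformC w1 u2) (bformC w2 u1) (bformC w2 w1) (bformC u2 u1) u2w1 u1w2.
move: (bform Q w1 w2) (bform Q u1 u2) (u1 *m u2^T *m Q) (u2 *m u1^T *m Q)
  (w1 *m w2^T *m Q) (w2 *m w1^T *m Q) => a b U U' W W'.
by rewrite !scale0r !subr0 !sub0r !scalerBr !opprD !opprK addrACA.
Qed.

Lemma exists_anisotropic m (A : 'M_(m, d)) :
  A *m Q *m A^T != 0 -> exists2 w, (w^T <= A)%MS & bform Q w w != 0.
Proof.
case/exists_bform_neq0 => w1 [w2 [sw1A sw2A nz12]].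
have [iso1|] := eqVneq (bform Q w1 w1) 0; last by exists w1.
have [iso2|] := eqVneq (bform Q w2 w2) 0; last by exists w2.
exists (w1 + w2); first by rewrite linearD addmx_sub.
rewrite bformDl !(bformC _ (w1 + w2)) !bformDl iso1 iso2 (bformC w2 w1).
by rewrite add0r addr0 -mulr2n Num.Theory.mulrn_eq0 negb_or.
Qed.

Lemma hyperbolic_gram_unit {u1 u2} :
  bform Q u1 u1 = 0 -> bform Q u2 u2 = 0 -> bform Q u1 u2 != 0 ->
  (row_mx u1 u2)^T *m Q *m row_mx u1 u2 \in unitmx.
Proof.
move=> iso1 iso2 nz12; rewrite gram_row_mx iso1 iso2 (bformC u2 u1) raddf0.
set c := bform Q u1 u2.
suff : block_mx 0 c%:M c%:M 0 *m block_mx 0 c^-1%:M c^-1%:M 0 = 1%:M :> 'M_(1 + 1).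
  by case/mulmx1_unit.
rewrite mulmx_block !mulmx0 !mul0mx !add0r !addr0 -!scalar_mxM mulfV //.
by rewrite -scalar_mx_block.
Qed.

Hypothesis unitQ : Q \in unitmx.

Lemma exists_perpmx_pair {k1 k2} (X1 : 'M_(d, k1)) (X2 : 'M_(d, k2)) :
  (k1 + k2 < d)%N ->
  exists w1 w2,
    [/\ (w1^T <= perpmx Q X1)%MS, (w2^T <= perpmx Q X2)%MS & bform Q w1 w2 != 0].
Proof.
move=> ltkd; apply: exists_bform_neq0; apply/eqP.
move/(perpmx_orth_sub symQ unitQ)/mxrankS.
by have := rank_perpmx Q X1; have := rank_leq_row X2^T; lia.
Qed.

Lemma exists_anisotropic_perpmx {kY kZ} (Y : 'M_(d, kY)) (Z : 'M_(d, kZ)) :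
  Z^T *m Q *m Z \in unitmx -> (kY + kY + kZ < d)%N ->
  exists2 w, (w^T <= perpmx Q (row_mx Y Z))%MS & bform Q w w != 0.
Proof.
move=> unitG ltd; apply: exists_anisotropic; apply/eqP.
(* A totally isotropic complement K lies in the span of Y and Z; being
   orthogonal to Z, whose Gram matrix G is invertible, it lies in the span of
   the projections of the columns of Y, so its rank is at most kY. *)
move/(perpmx_orth_sub symQ unitQ)/submxP => [D].
have rankK := rank_perpmx Q (row_mx Y Z).
have KQZ : perpmx Q (row_mx Y Z) *m Q *m Z = 0.
  have := submx_refl (perpmx Q (row_mx Y Z)).
  by case/sub_perpmx_row_mxP => _ /sub_kermxP KQZ; rewrite -mulmxA.
move: (perpmx Q _) rankK KQZ => K rankK KQZ.
rewrite tr_row_mx -[D]hsubmxK mul_row_col; set A := lsubmx D; set B := rsubmx D.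
move=> defK; set G := Z^T *m Q *m Z.
have defB : B = - (A *m (Y^T *m Q *m Z) *m invmx G).
  have : A *m (Y^T *m Q *m Z) + B *m G = 0.
    by move: KQZ; rewrite defK !mulmxDl !mulmxA.
  move/(congr1 (mulmx^~ (invmx G))); rewrite mulmxDl mulmxK // mul0mx.
  by move/eqP; rewrite addr_eq0 => /eqP->; rewrite opprK.
have defKA : K = A *m (Y^T - Y^T *m Q *m Z *m invmx G *m Z^T).
  by rewrite defK defB mulmxBr mulNmx !mulmxA.
have : (\rank K <= kY)%N.
  by rewrite defKA (leq_trans (mxrankM_maxr _ _)) ?rank_leq_row.
lia.
Qed.
End BilinearForm.

Lemma r_sub_vline {R : realType} {d : nat} {Q : 'M[R[i]]_d} {l u h} :
  r_sub Q <[l]> u h -> forall w, bform Q l w = 0 -> bform Q u w = 0 -> wedge Q u w \in h.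
Proof.
move=> r_h w lw uw; apply: r_h => _ /memv_addP[_ /vlineP[a ->] [_ /vlineP[b ->] ->]].
by rewrite bformDl !bformZl lw uw !mulr0 addr0.
Qed.

Theorem lemma5p6 (R : realType) (d : nat) (Q : 'M[R[i]]_d)
  (hd : (7 <= d)%N) (hQsym : Q^T = Q) (hQnd : Q \in unitmx)
  (L1 L2 : {vspace 'cV[R[i]]_d}) (u1 u2 : 'cV[R[i]]_d)
  (hL1 : \dim L1 = 1%N) (hL2 : \dim L2 = 1%N)
  (hu1 : u1 != 0) (hu2 : u2 != 0)
  (hu1perp : forall l, l \in L1 -> bform Q l u1 = 0)
  (hu2perp : forall l, l \in L2 -> bform Q l u2 = 0)
  (hu1iso : bform Q u1 u1 = 0) (hu2iso : bform Q u2 u2 = 0)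
  (hdim1 : \dim (L1 + <[u1]>)%VS = 2%N) (hdim2 : \dim (L2 + <[u2]>)%VS = 2%N)
  (h : {vspace 'M[R[i]]_d}) (hh : lie_subalg_so Q h)
  (hr1 : r_sub Q L1 u1 h) (hr2 : r_sub Q L2 u2 h) :
  wedge Q u1 u2 \in h.
Proof.
have [l1 defL1] := vline_of_dim1 hL1; have [l2 defL2] := vline_of_dim1 hL2.
move: hr1 hr2; rewrite defL1 defL2 => /r_sub_vline r1 /r_sub_vline r2.
have [_ closed_bracket] := hh.
have [c0|nz_c] := eqVneq (bform Q u1 u2) 0.
- have [w1 [w2 []]] := exists_perpmx_pair hQsym hQnd
    (row_mx l1 (row_mx u1 u2)) (row_mx l2 (row_mx u1 u2)) ltac:(lia).
  move=> /sub_perpmx_row_mxP[/(sub_perpmx_vecP hQsym) l1w1 /(sub_perpmx2P hQsym)[u1w1 u2w1]].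
  move=> /sub_perpmx_row_mxP[/(sub_perpmx_vecP hQsym) l2w2 /(sub_perpmx2P hQsym)[u1w2 u2w2]].
  move=> nz12.
  have := closed_bracket _ _ (r1 w1 l1w1 u1w1) (r2 w2 l2w2 u2w2).
  rewrite (wedge_commutator hQsym u2w1 u1w2).
  by rewrite c0 scale0r subr0 rpredN memvZ_eq.
- have [w] := exists_anisotropic_perpmx hQsym hQnd (row_mx l1 l2) (row_mx u1 u2)
    (hyperbolic_gram_unit hQsym hu1iso hu2iso nz_c) ltac:(lia).
  move=> /sub_perpmx_row_mxP[/(sub_perpmx2P hQsym)[l1w l2w] /(sub_perpmx2P hQsym)[u1w u2w]].
  move=> nzw.
  have := closed_bracket _ _ (r1 w l1w u1w) (r2 w l2w u2w).
  rewrite (wedge_commutator hQsym u2w u1w).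
  by rewrite [wedge Q w w]subrr scaler0 subr0 rpredN memvZ_eq.
Qed.
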